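(* Let $d$ be a positive integer, let $a>0$, and let $x$ be a real number with $x>1-\frac{2}{d+1}$ (and $x<1$). Among all degree distributions $\gamma$ with average degree $a$ and maximal degree $d$, the one which maximizes $\gamma(x)$ has the form $\gamma(x)=\gamma_ix^{i-1}+\gamma_{i+1}x^{i}$, where $i=\lfloor a\rfloor$ is the largest integer smaller than $a$.
   Context: A degree distribution is a polynomial $\gamma(x)=\sum_{k\ge2}\gamma_kx^{k-1}$ with $\gamma_k\ge0$ and $\sum_k\gamma_k=1$; its maximal degree is the largest $k$ with $\gamma_k\ne0$, and its average degree $a$ is defined by $1/a=\int_0^1\gamma(x)\,dx$. *)

From Stdlib Require Import Reals Lra.
From Coquelicot Require Import Coquelicot.
Open Scope R_scope.

(* A degree distribution with maximal degree at most d is represented by its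
   coefficient function g : nat -> R (g k = gamma_k), supported on {2,...,d}. *)
Definition is_degree_distribution (d : nat) (g : nat -> R) : Prop :=
  (forall k, 0 <= g k) /\
  (forall k, (k < 2)%nat \/ (d < k)%nat -> g k = 0) /\
  sum_f_R0 g d = 1.

Definition gamma_eval (d : nat) (g : nat -> R) (x : R) : R :=
  sum_f_R0 (fun k => g k * x ^ (k - 1)) d.

Definition has_average_degree (d : nat) (g : nat -> R) (a : R) : Prop :=
  RInt (fun t => gamma_eval d g t) 0 1 = 1 / a.

From Stdlib Require Import Reals Lra Lia.
From Coquelicot Require Import Coquelicot.
Open Scope R_scope.

(* The argument is LP duality.  Since the constraints read [sum_k g_k = 1] and
   [sum_k g_k / k = 1/a], for any reals A, B
     gamma(x) = sum_k (g_k / k) k x^(k-1) = A + B/a + sum_k (g_k / k) c_k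
   with the reduced cost [c_k = k x^(k-1) - A k - B].  Choose A, B so that
   [c_i = c_(i+1) = 0].  The hypothesis on x makes [k |-> k x^(k-1)] strictly
   concave on [1 .. d+1], hence [c_k < 0] for every other k.  So a distribution
   charging some [k] outside [{i, i+1}] has [gamma(x) < A + B/a], the value
   attained by the two-point distribution on [{i, i+1}] with average degree a. *)

Lemma sum_f_R0_delta (c : R) (i n : nat) :
  sum_f_R0 (fun k => if (k =? i)%nat then c else 0) n =
  if (i <=? n)%nat then c else 0.
Proof.
  induction n as [|n IH].
  - destruct i; reflexivity.
  - rewrite tech5, IH.
    destruct (Nat.eqb_spec (S n) i), (Nat.leb_spec i n), (Nat.leb_spec i (S n));
      try lia; ring.
Qed.

Lemma sum_f_R0_two_point (f : nat -> R) (i n : nat) :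
  (forall k, k <> i -> k <> S i -> f k = 0) ->
  (i <= n)%nat -> (n = i -> f (S i) = 0) ->
  sum_f_R0 f n = f i + f (S i).
Proof.
  intros Hsupp Hin Hedge.
  rewrite (sum_eq f (fun k => (if (k =? i)%nat then f i else 0)
                            + (if (k =? S i)%nat then f (S i) else 0))).
  - rewrite plus_sum, !sum_f_R0_delta.
    destruct (Nat.leb_spec i n), (Nat.leb_spec (S i) n); try lia.
    + reflexivity.
    + rewrite Hedge by lia. ring.
  - intros k _.
    destruct (Nat.eqb_spec k i), (Nat.eqb_spec k (S i)); subst; try lia; try ring.
    rewrite Hsupp by assumption. ring.
Qed.

Lemma sum_f_R0_neg (c : nat -> R) (n k0 : nat) :
  (forall k, (k <= n)%nat -> c k <= 0) -> (k0 <= n)%nat -> c k0 < 0 ->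
  sum_f_R0 c n < 0.
Proof.
  intros Hle Hk0 Hneg.
  apply Rle_lt_trans with (sum_f_R0 (fun k => if (k =? k0)%nat then c k0 else 0) n).
  - apply sum_Rle. intros k Hk.
    destruct (Nat.eqb_spec k k0); [subst; lra | now apply Hle].
  - rewrite sum_f_R0_delta. destruct (Nat.leb_spec k0 n); [exact Hneg | lia].
Qed.

Lemma is_RInt_monomial (c : R) (k : nat) :
  is_RInt (fun t => c * t ^ k) 0 1 (c / INR (S k)).
Proof.
  replace (c / INR (S k)) with (scal c (1 ^ S k / INR (S k) - 0 ^ S k / INR (S k))).
  - apply (is_RInt_scal (V := R_NormedModule)), is_RInt_pow.
  - rewrite pow1, pow_i by lia. unfold scal; simpl; unfold mult; simpl.
    unfold Rdiv. ring.
Qed.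

Lemma is_RInt_gamma_eval (d : nat) (f : nat -> R) :
  f 0%nat = 0 ->
  is_RInt (fun t => gamma_eval d f t) 0 1 (sum_f_R0 (fun k => f k / INR k) d).
Proof.
  intros Hf0. unfold gamma_eval. induction d as [|d IH].
  - cbn [sum_f_R0]. rewrite Hf0.
    replace (0 / INR 0) with (0 / INR 1) by (unfold Rdiv; ring).
    apply is_RInt_monomial.
  - apply (is_RInt_ext (fun t => sum_f_R0 (fun k => f k * t ^ (k - 1)) d
                                 + f (S d) * t ^ d)).
    { intros t _. rewrite tech5, Nat.sub_succ, Nat.sub_0_r. reflexivity. }
    rewrite tech5. apply (is_RInt_plus _ _ _ _ _ _ IH), is_RInt_monomial.
Qed.

Lemma has_average_degree_iff (d : nat) (f : nat -> R) (a : R) :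
  f 0%nat = 0 ->
  has_average_degree d f a <-> sum_f_R0 (fun k => f k / INR k) d = 1 / a.
Proof.
  intros Hf0. unfold has_average_degree.
  rewrite (is_RInt_unique _ _ _ _ (is_RInt_gamma_eval d f Hf0)).
  reflexivity.
Qed.

Lemma inv_average_degree_bounds (d : nat) (f : nat -> R) :
  is_degree_distribution d f ->
  / INR d <= sum_f_R0 (fun k => f k / INR k) d <= / 2.
Proof.
  intros (Hpos & Hsupp & Hsum).
  assert (Hterm : forall k, (k <= d)%nat ->
            f k * / INR d <= f k / INR k <= f k * / 2).
  { intros k Hk. destruct (Nat.lt_ge_cases k 2).
    - rewrite Hsupp by lia. unfold Rdiv. lra.
    - assert (2 <= INR k) by (apply (le_INR 2); lia).
      assert (INR k <= INR d) by (apply le_INR; lia).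
      unfold Rdiv. split; apply Rmult_le_compat_l; try apply Hpos;
        apply Rinv_le_contravar; lra. }
  replace (/ INR d) with (sum_f_R0 (fun k => f k * / INR d) d)
    by (rewrite <- scal_sum, Hsum; ring).
  replace (/ 2) with (sum_f_R0 (fun k => f k * / 2) d)
    by (rewrite <- scal_sum, Hsum; ring).
  split; apply sum_Rle; intros k Hk; apply Hterm, Hk.
Qed.

Lemma average_degree_bounds (d : nat) (f : nat -> R) (a : R) :
  (1 <= d)%nat -> 0 < a ->
  is_degree_distribution d f -> has_average_degree d f a ->
  2 <= a <= INR d.
Proof.
  intros Hd Ha Hf Havg.
  assert (Hf0 : f 0%nat = 0) by (apply Hf; lia).
  apply has_average_degree_iff in Havg; [|exact Hf0].
  destruct (inv_average_degree_bounds d f Hf) as [Hlo Hhi].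
  rewrite Havg in Hlo, Hhi. unfold Rdiv in Hlo, Hhi. rewrite Rmult_1_l in Hlo, Hhi.
  assert (0 < INR d) by (apply lt_0_INR; lia).
  split.
  - destruct (Rlt_or_le a 2) as [Hlt|]; [|assumption].
    assert (/ 2 < / a) by (apply Rinv_lt_contravar; nra). lra.
  - destruct (Rlt_or_le (INR d) a) as [Hlt|]; [|assumption].
    assert (/ a < / INR d) by (apply Rinv_lt_contravar; nra). lra.
Qed.

Definition two_point (i : nat) (p : R) (k : nat) : R :=
  if (k =? i)%nat then p else if (k =? S i)%nat then 1 - p else 0.

Lemma two_point_supp (i : nat) (p : R) (k : nat) :
  k <> i -> k <> S i -> two_point i p k = 0.
Proof.
  intros Hi HSi. unfold two_point.
  destruct (Nat.eqb_spec k i), (Nat.eqb_spec k (S i)); [lia | lia | lia | reflexivity].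
Qed.

Lemma two_point_at (i : nat) (p : R) : two_point i p i = p.
Proof. unfold two_point. now rewrite Nat.eqb_refl. Qed.

Lemma two_point_at_succ (i : nat) (p : R) : two_point i p (S i) = 1 - p.
Proof.
  unfold two_point. rewrite Nat.eqb_refl.
  destruct (Nat.eqb_spec (S i) i); [lia | reflexivity].
Qed.

(* The weight [p] on [i] solves [p / i + (1 - p) / (i + 1) = 1 / a]. *)
Lemma two_point_distribution (d i : nat) (a : R) :
  (2 <= i)%nat -> INR i <= a <= INR d -> a < INR i + 1 ->
  let h := two_point i (INR i * (INR i + 1 - a) / a) in
  is_degree_distribution d h /\ has_average_degree d h a.
Proof.
  intros Hi2 [Hia HaD] Hai h.
  set (p := INR i * (INR i + 1 - a) / a) in h.
  assert (HI : 2 <= INR i) by (apply (le_INR 2); lia).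
  assert (Hid : (i <= d)%nat) by (apply INR_le; lra).
  assert (Hpa : p * a = INR i * (INR i + 1 - a)) by (unfold p; field; lra).
  assert (Hp0 : 0 <= p).
  { unfold p, Rdiv. apply Rmult_le_pos; [apply Rmult_le_pos; lra|].
    left; apply Rinv_0_lt_compat; lra. }
  assert (Hp1 : p <= 1) by nra.
  assert (Hedge : d = i -> p = 1).
  { intros ->. assert (Hpa1 : p * a = 1 * a) by nra.
    apply Rmult_eq_reg_r in Hpa1; lra. }
  assert (Hsupp : forall k, k <> i -> k <> S i -> h k = 0)
    by (intros; now apply two_point_supp).
  assert (Hh_edge : d = i -> h (S i) = 0).
  { intros Hdi. unfold h. rewrite two_point_at_succ, Hedge by exact Hdi. ring. }
  assert (Hh0 : h 0%nat = 0) by (apply Hsupp; lia).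
  split; [split; [|split]|].
  - intros k. unfold h, two_point.
    destruct (Nat.eqb k i), (Nat.eqb k (S i)); lra.
  - intros k Hk. destruct (Nat.eq_dec k (S i)) as [->|]; [apply Hh_edge; lia|].
    apply Hsupp; lia.
  - rewrite (sum_f_R0_two_point h i d Hsupp Hid Hh_edge).
    unfold h. rewrite two_point_at, two_point_at_succ. ring.
  - apply has_average_degree_iff; [exact Hh0|].
    rewrite (sum_f_R0_two_point (fun k => h k / INR k) i d).
    + unfold h. rewrite two_point_at, two_point_at_succ, S_INR.
      unfold p. field. lra.
    + intros k Hk HSk. rewrite Hsupp by assumption. unfold Rdiv. ring.
    + exact Hid.
    + intros Hdi. cbv beta. rewrite Hh_edge by exact Hdi. unfold Rdiv. ring.
Qed.

Definition reduced_cost (x A B : R) (k : nat) : R :=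
  INR k * x ^ (k - 1) - A * INR k - B.

Lemma reduced_cost_interpolation (x : R) (i : nat) :
  exists A B, reduced_cost x A B i = 0 /\ reduced_cost x A B (S i) = 0.
Proof.
  set (A := INR (S i) * x ^ i - INR i * x ^ (i - 1)).
  exists A, (INR i * x ^ (i - 1) - A * INR i).
  unfold reduced_cost. rewrite Nat.sub_succ, Nat.sub_0_r.
  split; unfold A; rewrite ?S_INR; ring.
Qed.

Lemma reduced_cost_second_difference (x A B : R) (p : nat) :
  reduced_cost x A B (S (S (S p))) - 2 * reduced_cost x A B (S (S p))
    + reduced_cost x A B (S p)
  = x ^ p * ((x - 1) * ((INR p + 3) * x - (INR p + 1))).
Proof.
  unfold reduced_cost. rewrite !Nat.sub_succ, !Nat.sub_0_r, !S_INR.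
  simpl pow. ring.
Qed.

Lemma concave_neg_off_zeros (G : nat -> R) (lo hi i : nat) :
  (forall n, (lo <= n)%nat -> (S (S n) <= hi)%nat ->
     G (S (S n)) - 2 * G (S n) + G n < 0) ->
  (lo <= i)%nat -> (S i <= hi)%nat -> G i = 0 -> G (S i) = 0 ->
  forall k, (lo <= k <= hi)%nat -> k <> i -> k <> S i -> G k < 0.
Proof.
  intros Hconc Hlo Hhi Gi GSi.
  assert (Hright : forall m, (S (S (i + m)) <= hi)%nat ->
            G (S (S (i + m))) < G (S (i + m)) /\ G (S (S (i + m))) < 0).
  { induction m as [|m IH]; intros Hm.
    - rewrite Nat.add_0_r in *. pose proof (Hconc i Hlo Hm). lra.
    - rewrite Nat.add_succ_r in *. destruct (IH ltac:(lia)).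
      pose proof (Hconc (S (i + m)) ltac:(lia) Hm). lra. }
  assert (Hleft : forall m k, (k + S m = i)%nat -> (lo <= k)%nat ->
            G k < G (S k) /\ G k < 0).
  { induction m as [|m IH]; intros k Hk Hlok.
    - replace i with (S k) in * by lia. pose proof (Hconc k Hlok Hhi). lra.
    - destruct (IH (S k) ltac:(lia) ltac:(lia)).
      pose proof (Hconc k Hlok ltac:(lia)). lra. }
  intros k Hk Hki HkSi.
  destruct (Nat.lt_ge_cases k i).
  - apply (Hleft (i - k - 1)%nat k); lia.
  - replace k with (S (S (i + (k - S (S i))))) by lia. apply Hright. lia.
Qed.

Lemma threshold_lt (d p : nat) (x : R) :
  (p + 2 <= d)%nat -> 1 - 2 / (INR d + 1) < x -> INR p + 1 < (INR p + 3) * x.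
Proof.
  intros Hpd Hx.
  assert (Hp : INR p + 3 <= INR d + 1).
  { assert (Hpd' : INR (p + 2) <= INR d) by (apply le_INR, Hpd).
    rewrite plus_INR in Hpd'. simpl in Hpd'. lra. }
  assert (0 <= INR p) by apply pos_INR.
  assert (2 / (INR p + 3) * (INR p + 3) = 2) by (field; lra).
  assert (2 / (INR d + 1) <= 2 / (INR p + 3)).
  { unfold Rdiv. apply Rmult_le_compat_l; [lra|]. apply Rinv_le_contravar; lra. }
  nra.
Qed.

Lemma reduced_cost_neg (d i : nat) (x A B : R) :
  1 - 2 / (INR d + 1) < x -> x < 1 -> (1 <= i <= d)%nat ->
  reduced_cost x A B i = 0 -> reduced_cost x A B (S i) = 0 ->
  forall k, (1 <= k <= d)%nat -> k <> i -> k <> S i -> reduced_cost x A B k < 0.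
Proof.
  intros Hx Hx1 Hi Ci CSi k Hk.
  apply (concave_neg_off_zeros _ 1 (S d) i); [| lia | lia | assumption ..| lia].
  intros [|p] Hp Hpd; [lia|].
  rewrite reduced_cost_second_difference.
  pose proof (threshold_lt d p x ltac:(lia) Hx).
  assert (0 <= INR p) by apply pos_INR.
  assert (0 < x ^ p) by (apply pow_lt; nra).
  assert ((x - 1) * ((INR p + 3) * x - (INR p + 1)) < 0) by nra.
  nra.
Qed.

Lemma gamma_eval_reduced_cost (d : nat) (f : nat -> R) (x A B : R) :
  f 0%nat = 0 ->
  gamma_eval d f x =
  A * sum_f_R0 f d + B * sum_f_R0 (fun k => f k / INR k) d
  + sum_f_R0 (fun k => f k * reduced_cost x A B k / INR k) d.
Proof.
  intros Hf0.
  assert (Hterm : forall k, f k * x ^ (k - 1) =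
            A * f k + B * (f k / INR k) + f k * reduced_cost x A B k / INR k).
  { intros [|k].
    - rewrite Hf0. unfold Rdiv. ring.
    - unfold reduced_cost. field. apply not_0_INR. lia. }
  unfold gamma_eval. induction d as [|d IH].
  - apply Hterm.
  - rewrite !tech5, IH, Hterm. ring.
Qed.

Section DualBound.

Variables (d i : nat) (x A B a : R).
Hypothesis cost_i : reduced_cost x A B i = 0.
Hypothesis cost_Si : reduced_cost x A B (S i) = 0.

Lemma gamma_eval_dual (f : nat -> R) :
  is_degree_distribution d f -> has_average_degree d f a ->
  gamma_eval d f x =
  A + B / a + sum_f_R0 (fun k => f k * reduced_cost x A B k / INR k) d.
Proof.
  intros (Hpos & Hsupp & Hsum) Havg.
  assert (Hf0 : f 0%nat = 0) by (apply Hsupp; lia).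
  apply has_average_degree_iff in Havg; [|exact Hf0].
  rewrite (gamma_eval_reduced_cost d f x A B Hf0), Hsum, Havg.
  unfold Rdiv. ring.
Qed.

Lemma gamma_eval_two_point_support (f : nat -> R) :
  is_degree_distribution d f -> has_average_degree d f a ->
  (forall k, k <> i -> k <> S i -> f k = 0) ->
  gamma_eval d f x = A + B / a.
Proof.
  intros Hf Havg Hsupp.
  rewrite (gamma_eval_dual f Hf Havg).
  rewrite (sum_eq _ (fun _ => 0)), sum_cte; [ring|].
  intros k _. unfold Rdiv.
  destruct (Nat.eq_dec k i) as [->|Hki]; [rewrite cost_i; ring|].
  destruct (Nat.eq_dec k (S i)) as [->|HkSi]; [rewrite cost_Si; ring|].
  rewrite Hsupp by assumption. ring.
Qed.

Hypothesis cost_neg :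
  forall k, (1 <= k <= d)%nat -> k <> i -> k <> S i -> reduced_cost x A B k < 0.

Lemma gamma_eval_lt_off_support (f : nat -> R) (k0 : nat) :
  is_degree_distribution d f -> has_average_degree d f a ->
  f k0 <> 0 -> k0 <> i -> k0 <> S i ->
  gamma_eval d f x < A + B / a.
Proof.
  intros Hf Havg Hk0 Hk0i Hk0Si.
  rewrite (gamma_eval_dual f Hf Havg).
  destruct Hf as (Hpos & Hsupp & _).
  assert (Hk0d : (2 <= k0 <= d)%nat).
  { destruct (Nat.lt_ge_cases k0 2), (Nat.lt_ge_cases d k0);
      try (exfalso; apply Hk0, Hsupp; lia); lia. }
  enough (sum_f_R0 (fun k => f k * reduced_cost x A B k / INR k) d < 0) by lra.
  apply (sum_f_R0_neg _ d k0); [| lia |].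
  - intros [|k] Hk.
    + rewrite (Hsupp 0%nat) by lia. unfold Rdiv. lra.
    + unfold Rdiv. apply Rmult_le_0_r; [| left; apply Rinv_0_lt_compat, lt_0_INR; lia].
      destruct (Nat.eq_dec (S k) i) as [->|]; [rewrite cost_i; lra|].
      destruct (Nat.eq_dec (S k) (S i)) as [->|]; [rewrite cost_Si; lra|].
      apply Rmult_le_0_l; [apply Hpos|]. left. apply cost_neg; lia.
  - assert (0 < f k0) by (pose proof (Hpos k0); lra).
    assert (reduced_cost x A B k0 < 0) by (apply cost_neg; lia).
    unfold Rdiv. apply Rmult_neg_pos; [nra|].
    apply Rinv_0_lt_compat, lt_0_INR. lia.
Qed.

End DualBound.

Theorem theorem3 (d : nat) (a x : R) (g : nat -> R) (i : nat) :
  (1 <= d)%nat ->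
  0 < a ->
  1 - 2 / (INR d + 1) < x -> x < 1 ->
  INR i <= a < INR i + 1 ->
  is_degree_distribution d g ->
  has_average_degree d g a ->
  (forall h : nat -> R,
     is_degree_distribution d h -> has_average_degree d h a ->
     gamma_eval d h x <= gamma_eval d g x) ->
  forall k : nat, g k <> 0 -> k = i \/ k = S i.
Proof.
  intros Hd Ha Hx Hx1 [Hia Hai] Hg Havg Hmax k Hk.
  destruct (average_degree_bounds d g a Hd Ha Hg Havg) as [Ha2 HaD].
  assert (Hi2 : (2 <= i)%nat) by (apply INR_lt; simpl; lra).
  assert (Hid : (i <= d)%nat) by (apply INR_le; lra).
  destruct (reduced_cost_interpolation x i) as (A & B & Ci & CSi).
  pose proof (reduced_cost_neg d i x A B Hx Hx1 ltac:(lia) Ci CSi) as Cneg.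
  destruct (two_point_distribution d i a Hi2 ltac:(lra) Hai) as [Hh Hhavg].
  destruct (Nat.eq_dec k i) as [|Hki]; [now left|].
  destruct (Nat.eq_dec k (S i)) as [|HkSi]; [now right|].
  exfalso.
  pose proof (Hmax _ Hh Hhavg) as Hle.
  rewrite (gamma_eval_two_point_support d i x A B a Ci CSi _ Hh Hhavg
             (two_point_supp i _)) in Hle.
  pose proof (gamma_eval_lt_off_support d i x A B a Ci CSi Cneg g k Hg Havg Hk Hki HkSi).
  lra.
Qed.
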